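(* Let $k\in\mathbb{N}$ and let $\phi:\mathbb{M}_n\to\mathbb{M}_m$ be a $(k+1)$-positive linear map. Then $\mathrm{id}_k\otimes\phi:\mathbb{M}_k\otimes\mathbb{M}_n\to\mathbb{M}_k\otimes\mathbb{M}_m$ is a generalized Schwarz map.
   Context: $\mathbb{M}_n$ denotes the $n\times n$ complex matrices; $\mathrm{id}_k$ is the identity map on $\mathbb{M}_k$, and $\mathbb{M}_k\otimes\mathbb{M}_n\cong\mathbb{M}_{kn}$. A linear map $\phi$ is $j$-positive if $\mathrm{id}_j\otimes\phi$ maps positive semidefinite matrices to positive semidefinite matrices. A linear map $\psi:\mathbb{M}_N\to\mathbb{M}_M$ is a generalized Schwarz map if for all $K\in\mathbb{M}_N$ the block matrix $\begin{pmatrix}\psi(\mathbf{1}_N) & \psi(K)\\ \psi(K)^* & \psi(K^*K)\end{pmatrix}$ is positive semidefinite. *)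

From HB Require Import structures.
From mathcomp Require Import all_boot all_order all_algebra.
Set Implicit Arguments. Unset Strict Implicit. Unset Printing Implicit Defensive.
Import Order.TTheory GRing.Theory Num.Theory.
Local Open Scope ring_scope.

(* Complex scalars: an arbitrary numClosedFieldType C (e.g. the complex numbers). *)

Definition ctrmx (C : numClosedFieldType) (p q : nat) (A : 'M[C]_(p, q)) : 'M[C]_(q, p) :=
  (map_mx Num.conj A)^T.

(* positive semidefinite: v^* A v >= 0 for every column vector v
   (over a numClosedField this forces A to be Hermitian) *)
Definition psdmx (C : numClosedFieldType) (p : nat) (A : 'M[C]_p) : Prop :=
  forall v : 'cV[C]_p, 0 <= (ctrmx v *m A *m v) 0 0.

(* decomposition of an index of 'I_(j * p) as a pair in 'I_j * 'I_p
   (inverse of mathcomp's mxvec_index) : the identification M_j (x) M_p = M_(j p) *)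
Definition split_index (j p : nat) (r : 'I_(j * p)) : 'I_j * 'I_p :=
  enum_val (cast_ord (esym (mxvec_cast j p)) r).

(* the (i, i') block of X : 'M_(j*n), i.e. X = sum_{i,i'} E_{i i'} (x) blk X i i' *)
Definition blk (C : numClosedFieldType) (j n : nat) (X : 'M[C]_(j * n)) (i i' : 'I_j)
  : 'M[C]_n := \matrix_(c, d) X (mxvec_index i c) (mxvec_index i' d).

(* id_j (x) phi : M_j (x) M_n -> M_j (x) M_m, acting blockwise *)
Definition tens_id (C : numClosedFieldType) (n m : nat) (j : nat)
  (phi : 'M[C]_n -> 'M[C]_m) (X : 'M[C]_(j * n)) : 'M[C]_(j * m) :=
  \matrix_(r, s) phi (blk X (split_index r).1 (split_index s).1)
                     (split_index r).2 (split_index s).2.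
Arguments tens_id {C n m} j phi X.

Definition j_positive (C : numClosedFieldType) (n m : nat) (j : nat)
  (phi : 'M[C]_n -> 'M[C]_m) : Prop :=
  forall X : 'M[C]_(j * n), psdmx X -> psdmx (tens_id j phi X).

Arguments j_positive {C n m} j phi.

Definition gen_schwarz (C : numClosedFieldType) (N M : nat)
  (psi : 'M[C]_N -> 'M[C]_M) : Prop :=
  forall K : 'M[C]_N,
    psdmx (block_mx (psi 1%:M) (psi K) (ctrmx (psi K)) (psi (ctrmx K *m K))).

From HB Require Import structures.
From mathcomp Require Import all_boot all_order all_algebra.
From mathcomp Require Import ring.
Set Implicit Arguments. Unset Strict Implicit. Unset Printing Implicit Defensive.
Import Order.TTheory GRing.Theory Num.Theory.
Local Open Scope ring_scope.

(* Write Phi for id_k (x) phi and K_(l,i) for the n x n blocks of K.  Since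
   1 = sum_l P_l with P_l the projection onto the l-th block,
   [[1, K], [K^*, K^*K]] = [1; K^*] [1, K] is the sum over l of U_l U_l^* with
   U_l = [1; K^*] P_l, whose only nonzero blocks are 1 (l-th block of the upper
   half) and K_(l,i)^* (i-th block of the lower half): k + 1 blocks in all.  By
   (k+1)-positivity each U_l U_l^* is mapped to a positive semidefinite matrix,
   so [[Phi 1, Phi K], [Phi K^*, Phi (K^*K)]] is positive semidefinite.  Being
   positive semidefinite it is Hermitian, which identifies Phi K^* with
   (Phi K)^*. *)

Section ConjTranspose.
Variable C : numClosedFieldType.

Lemma ctrmxK p q (A : 'M[C]_(p, q)) : ctrmx (ctrmx A) = A.
Proof. by apply/matrixP => i j; rewrite !mxE conjCK. Qed.

Lemma ctrmx_mul p q r (A : 'M[C]_(p, q)) (B : 'M[C]_(q, r)) :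
  ctrmx (A *m B) = ctrmx B *m ctrmx A.
Proof. by rewrite /ctrmx map_mxM trmx_mul. Qed.

Lemma ctrmx1 p : ctrmx (1%:M : 'M[C]_p) = 1%:M.
Proof. by rewrite /ctrmx map_scalar_mx rmorph1 tr_scalar_mx. Qed.

Lemma ctrmxD p q (A B : 'M[C]_(p, q)) : ctrmx (A + B) = ctrmx A + ctrmx B.
Proof. by rewrite /ctrmx map_mxD linearD. Qed.

Lemma ctrmxZ p q a (A : 'M[C]_(p, q)) : ctrmx (a *: A) = a^* *: ctrmx A.
Proof. by rewrite /ctrmx map_mxZ linearZ. Qed.

Lemma ctrmx_col_mx p1 p2 q (A : 'M[C]_(p1, q)) (B : 'M[C]_(p2, q)) :
  ctrmx (col_mx A B) = row_mx (ctrmx A) (ctrmx B).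
Proof. by rewrite /ctrmx map_col_mx tr_col_mx. Qed.

Lemma ctrmx_block_mx p1 p2 q1 q2 (A : 'M[C]_(p1, q1)) (B : 'M[C]_(p1, q2))
    (D : 'M[C]_(p2, q1)) (E : 'M[C]_(p2, q2)) :
  ctrmx (block_mx A B D E) = block_mx (ctrmx A) (ctrmx D) (ctrmx B) (ctrmx E).
Proof. by rewrite /ctrmx map_block_mx tr_block_mx. Qed.

End ConjTranspose.

Section Sesquilinear.
Variable C : numClosedFieldType.

Definition sesq p q (x : 'cV[C]_p) (M : 'M[C]_(p, q)) (y : 'cV[C]_q) : C :=
  (ctrmx x *m M *m y) 0 0.

Lemma sesqE p q (x : 'cV[C]_p) (M : 'M[C]_(p, q)) (y : 'cV[C]_q) :
  sesq x M y = \sum_c \sum_d (x c 0)^* * M c d * y d 0.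
Proof.
rewrite /sesq mxE exchange_big; apply: eq_bigr => c _.
by rewrite mxE big_distrl; apply: eq_bigr => d _; rewrite !mxE.
Qed.

Lemma sesq_sum p q I (r : seq I) (P : pred I) (x : 'cV[C]_p)
    (M : I -> 'M[C]_(p, q)) (y : 'cV[C]_q) :
  sesq x (\sum_(i <- r | P i) M i) y = \sum_(i <- r | P i) sesq x (M i) y.
Proof. by rewrite /sesq mulmx_sumr mulmx_suml summxE. Qed.

Lemma sesq_col_block p1 p2 (x1 : 'cV[C]_p1) (x2 : 'cV[C]_p2) A B D E :
  sesq (col_mx x1 x2) (block_mx A B D E) (col_mx x1 x2) =
  sesq x1 A x1 + sesq x1 B x2 + sesq x2 D x1 + sesq x2 E x2.
Proof.
rewrite /sesq ctrmx_col_mx mul_row_block mul_row_col !mulmxDl !mxE.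
by rewrite addrACA !addrA.
Qed.

Lemma sesqDl p q (x1 x2 : 'cV[C]_p) (M : 'M[C]_(p, q)) y :
  sesq (x1 + x2) M y = sesq x1 M y + sesq x2 M y.
Proof. by rewrite /sesq ctrmxD !mulmxDl !mxE. Qed.

Lemma sesqDr p q x (M : 'M[C]_(p, q)) (y1 y2 : 'cV[C]_q) :
  sesq x M (y1 + y2) = sesq x M y1 + sesq x M y2.
Proof. by rewrite /sesq mulmxDr mxE. Qed.

Lemma sesqZl p q a (x : 'cV[C]_p) (M : 'M[C]_(p, q)) y :
  sesq (a *: x) M y = a^* * sesq x M y.
Proof. by rewrite /sesq ctrmxZ -!scalemxAl mxE. Qed.

Lemma sesqZr p q a x (M : 'M[C]_(p, q)) (y : 'cV[C]_q) :
  sesq x M (a *: y) = a * sesq x M y.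
Proof. by rewrite /sesq -scalemxAr mxE. Qed.

Lemma sesq0 p q (x : 'cV[C]_p) (y : 'cV[C]_q) : sesq x 0 y = 0.
Proof. by rewrite /sesq mulmx0 mul0mx mxE. Qed.

Lemma sesq_delta p q (i : 'I_p) (j : 'I_q) (M : 'M[C]_(p, q)) :
  sesq (delta_mx i 0) M (delta_mx j 0) = M i j.
Proof.
rewrite /sesq /ctrmx map_delta_mx trmx_delta -rowE -colE.
by rewrite !mxE.
Qed.

Lemma conjC_eq_of_form_ge0 (p q z w : C) :
  (forall a, 0 <= p + a * z + a^* * w + a^* * a * q) -> w = z^*.
Proof.
move=> ge0.
pose D a := p^* + a^* * z^* + a * w^* + a * a^* * q^*
            - (p + a * z + a^* * w + a^* * a * q).
(* [D a = 0] says that the form at [a] is real. *)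
have D0 a : D a = 0.
  apply/eqP; rewrite subr_eq0; apply/eqP.
  rewrite -[RHS](CrealP (ger0_real (ge0 a))).
  by rewrite !rmorphD !rmorphM /= !conjCK.
have : (w^* - z) *+ 4 = D 1 - D (-1) + 'i * (D 1 + D (-1)) - 'i *+ 2 * D 'i
         - ('i * 'i + 1) * (('i * (q^* - q) + z^* - w^* + z - w) *+ 2).
  by rewrite /D rmorph1 rmorphN1 conjCi; ring.
rewrite !D0 mulCii addNr mul0r !(subrr, addr0, mulr0) => /eqP.
rewrite mulrn_eq0 /= subr_eq0 => /eqP <-.
by rewrite conjCK.
Qed.

Lemma psdmx_sesq_conj p (A : 'M[C]_p) x y :
  psdmx A -> sesq y A x = (sesq x A y)^*.
Proof.
move=> psdA; apply: (conjC_eq_of_form_ge0 (p := sesq x A x) (q := sesq y A y)).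
move=> a; have : 0 <= sesq (x + a *: y) A (x + a *: y) := psdA _.
by rewrite !(sesqDl, sesqDr, sesqZl, sesqZr) mulrA !addrA.
Qed.

Lemma psdmx_ctrmx p (A : 'M[C]_p) : psdmx A -> ctrmx A = A.
Proof.
move=> psdA; apply/matrixP => i j; rewrite !mxE.
by rewrite -!sesq_delta (psdmx_sesq_conj _ _ psdA) conjCK.
Qed.

Lemma psdmx_mul_ctrmx p q (A : 'M[C]_(p, q)) : psdmx (A *m ctrmx A).
Proof.
move=> v; set u := ctrmx A *m v.
have -> : ctrmx v *m (A *m ctrmx A) *m v = ctrmx u *m u.
  by rewrite ctrmx_mul ctrmxK !mulmxA.
by rewrite mxE sumr_ge0 // => d _; rewrite !mxE mulrC mul_conjC_ge0.
Qed.

End Sesquilinear.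

Lemma split_index_mxvec j p (i : 'I_j) (c : 'I_p) :
  split_index (mxvec_index i c) = (i, c).
Proof. by rewrite /split_index /mxvec_index cast_ordK enum_rankK. Qed.

Lemma eq_mxvec_index j p (i i' : 'I_j) (c c' : 'I_p) :
  (mxvec_index i c == mxvec_index i' c') = (i == i') && (c == c').
Proof.
apply/eqP/andP => [/(congr1 (@split_index j p))|[/eqP-> /eqP->] //].
by rewrite !split_index_mxvec => -[-> ->].
Qed.

Lemma sum_mxvec_index (R : nmodType) j p (F : 'I_(j * p) -> R) :
  \sum_r F r = \sum_i \sum_c F (mxvec_index i c).
Proof.
rewrite pair_big /=; apply: reindex.
exists (@split_index j p) => [[i c] _ | r _]; first exact: split_index_mxvec.
by case/mxvec_indexP: r => i c; rewrite split_index_mxvec.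
Qed.

Section Blocks.
Variable C : numClosedFieldType.

Definition vblk j p (x : 'cV[C]_(j * p)) (i : 'I_j) : 'cV[C]_p :=
  \col_c x (mxvec_index i c) 0.

Definition stackmx j p q (F : 'I_j -> 'M[C]_(p, q)) : 'M[C]_(j * p, q) :=
  \matrix_(r, d) F (split_index r).1 (split_index r).2 d.

Lemma vblk_stackmx j p (x : 'I_j -> 'cV[C]_p) i : vblk (stackmx x) i = x i.
Proof. by apply/colP => c; rewrite !mxE split_index_mxvec. Qed.

Lemma blk_stackmx_mul j p q (U V : 'I_j -> 'M[C]_(p, q)) i i' :
  blk (stackmx U *m ctrmx (stackmx V)) i i' = U i *m ctrmx (V i').
Proof.
apply/matrixP => c d; rewrite !mxE; apply: eq_bigr => e _.
by rewrite !mxE !split_index_mxvec.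
Qed.

Lemma blk1 j p (i i' : 'I_j) :
  blk (1%:M : 'M[C]_(j * p)) i i' = if i == i' then 1%:M else 0.
Proof.
apply/matrixP => c d; rewrite !mxE eq_mxvec_index.
by case: (i == i'); rewrite ?mxE.
Qed.

Lemma blk_ctrmx j p (A : 'M[C]_(j * p)) i i' :
  blk (ctrmx A) i i' = ctrmx (blk A i' i).
Proof. by apply/matrixP => c d; rewrite !mxE. Qed.

Lemma blk_mul j p (A B : 'M[C]_(j * p)) i i' :
  blk (A *m B) i i' = \sum_l blk A i l *m blk B l i'.
Proof.
apply/matrixP => c d; rewrite !mxE summxE sum_mxvec_index.
by apply: eq_bigr => l _; rewrite mxE; apply: eq_bigr => e _; rewrite !mxE.
Qed.

Lemma sesq_tens_id j n m (phi : 'M[C]_n -> 'M[C]_m) (Y : 'M[C]_(j * n)) x y :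
  sesq x (tens_id j phi Y) y =
  \sum_i \sum_i' sesq (vblk x i) (phi (blk Y i i')) (vblk y i').
Proof.
rewrite sesqE sum_mxvec_index; apply: eq_bigr => i _.
under eq_bigr do rewrite sum_mxvec_index.
rewrite exchange_big; apply: eq_bigr => i' _; rewrite sesqE.
apply: eq_bigr => c _; apply: eq_bigr => d _.
by rewrite !mxE !split_index_mxvec.
Qed.

Lemma sesq_tens_id_ctrmx j n m (phi : 'M[C]_n -> 'M[C]_m)
    (K : 'M[C]_(j * n)) x y :
  sesq y (tens_id j phi (ctrmx K)) x =
  \sum_l \sum_s sesq (vblk y s) (phi (ctrmx (blk K l s))) (vblk x l).
Proof.
rewrite sesq_tens_id exchange_big.
by under eq_bigr do under eq_bigr do rewrite blk_ctrmx.
Qed.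

End Blocks.

Lemma j_positive_sum_ge0 (C : numClosedFieldType) n m q j
    (phi : 'M[C]_n -> 'M[C]_m) (phi_pos : j_positive j phi)
    (U : 'I_j -> 'M[C]_(n, q)) (W : 'I_j -> 'cV[C]_m) :
  0 <= \sum_s \sum_t sesq (W s) (phi (U s *m ctrmx (U t))) (W t).
Proof.
have := phi_pos _ (psdmx_mul_ctrmx (stackmx U)) (stackmx W).
rewrite -/(sesq _ _ _) sesq_tens_id.
by under eq_bigr do under eq_bigr do rewrite blk_stackmx_mul !vblk_stackmx.
Qed.

Definition ord_cons (T : Type) k (a : T) (f : 'I_k -> T) (s : 'I_k.+1) : T :=
  if unlift ord0 s is Some i then f i else a.

Lemma ord_cons0 (T : Type) k (a : T) (f : 'I_k -> T) : ord_cons a f ord0 = a.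
Proof. by rewrite /ord_cons unlift_none. Qed.

Lemma ord_cons_lift (T : Type) k (a : T) (f : 'I_k -> T) i :
  ord_cons a f (lift ord0 i) = f i.
Proof. by rewrite /ord_cons liftK. Qed.

Lemma sum2_ord_cons (R : nmodType) (T : Type) k (a : T) (f : 'I_k -> T)
    (F : T -> T -> R) :
  \sum_(s < k.+1) \sum_(t < k.+1) F (ord_cons a f s) (ord_cons a f t) =
  F a a + \sum_t F a (f t) + \sum_s F (f s) a + \sum_s \sum_t F (f s) (f t).
Proof.
rewrite big_ord_recl; under [X in _ + X]eq_bigr do rewrite big_ord_recl.
rewrite big_ord_recl big_split /= !ord_cons0 !addrA.
by congr (_ + _ + _ + _); apply: eq_bigr => s _;
  [| | apply: eq_bigr => t _]; rewrite !ord_cons_lift.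
Qed.

Section LinearTensId.
Variables (C : numClosedFieldType) (n m j : nat).
Variable phi : {linear 'M[C]_n -> 'M[C]_m}.
Implicit Types (x y : 'cV[C]_(j * m)) (K : 'M[C]_(j * n)).

Lemma sesq_tens_id1 x :
  sesq x (tens_id j phi 1%:M) x = \sum_i sesq (vblk x i) (phi 1%:M) (vblk x i).
Proof.
rewrite sesq_tens_id; apply: eq_bigr => i _.
rewrite (bigD1 i) //= blk1 eqxx big1 ?addr0 // => i' /negPf neq_i'i.
by rewrite blk1 eq_sym neq_i'i linear0 sesq0.
Qed.

Lemma sesq_tens_id_mul K y :
  sesq y (tens_id j phi (ctrmx K *m K)) y =
  \sum_l \sum_s \sum_t
     sesq (vblk y s) (phi (ctrmx (blk K l s) *m blk K l t)) (vblk y t).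
Proof.
rewrite sesq_tens_id.
under eq_bigr do under eq_bigr do rewrite blk_mul linear_sum sesq_sum.
under eq_bigr do rewrite exchange_big.
rewrite exchange_big.
by under eq_bigr do under eq_bigr do under eq_bigr do rewrite blk_ctrmx.
Qed.

End LinearTensId.

Lemma psdmx_tens_id_block (C : numClosedFieldType) n m k
    (phi : {linear 'M[C]_n -> 'M[C]_m}) (phi_pos : j_positive k.+1 phi)
    (K : 'M[C]_(k * n)) :
  psdmx (block_mx (tens_id k phi 1%:M) (tens_id k phi K)
                  (tens_id k phi (ctrmx K)) (tens_id k phi (ctrmx K *m K))).
Proof.
move=> v; rewrite -/(sesq _ _ _) -[v]vsubmxK sesq_col_block.
set x := usubmx v; set y := dsubmx v.
rewrite sesq_tens_id1 sesq_tens_id sesq_tens_id_ctrmx sesq_tens_id_mul.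
rewrite -!big_split; apply: sumr_ge0 => l _ /=.
(* P s = (W s, U s): U_0 = 1 and U_(i+1) = K_(l,i)^* are the blocks of U_l,
   W_0 = x_l and W_(i+1) = y_i the matching blocks of the test vector. *)
pose P := ord_cons (vblk x l, 1%:M) (fun s => (vblk y s, ctrmx (blk K l s))).
have := j_positive_sum_ge0 phi_pos (fun s => (P s).2) (fun s => (P s).1).
rewrite (sum2_ord_cons _ _ (fun u v => sesq u.1 (phi (u.2 *m ctrmx v.2)) v.1)).
rewrite /= ctrmx1 mulmx1.
under [X in _ + X + _ + _]eq_bigr do rewrite ctrmxK mul1mx.
under [X in _ + X + _]eq_bigr do rewrite mulmx1.
by under [X in _ + X]eq_bigr do under eq_bigr do rewrite ctrmxK.
Qed.

Theorem theoremA1 (C : numClosedFieldType) (n m k : nat)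
  (phi : {linear 'M[C]_n -> 'M[C]_m}) :
  j_positive k.+1 phi -> gen_schwarz (tens_id k phi).
Proof.
move=> phi_pos K.
have := psdmx_ctrmx (psdmx_tens_id_block phi_pos K).
rewrite ctrmx_block_mx => /eq_block_mx[_ _ ctrmx_tens_id_K _].
by rewrite ctrmx_tens_id_K; apply: psdmx_tens_id_block.
Qed.
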